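(* Let $(\mathscr C,A,\psi)$ be an entwining structure. Then the functors $S_\psi: {_A^{\mathscr C}}Ctr(\psi)\longrightarrow {^{\mathscr C}}Ctr$ and $T_\psi: {^{\mathscr C}}Ctr\longrightarrow {_A^{\mathscr C}}Ctr(\psi)$ form a Frobenius pair (i.e. $T_\psi$ is also left adjoint to $S_\psi$) if and only if there exist $\sigma\in V_1$ and $\lambda\in W_1$ such that \begin{gather*} \epsilon_X(f)\cdot 1= \sigma_X(f_{X1}\otimes \lambda^{X1}(f_{X2}))\lambda^{X2}(f_{X2}),\\ \epsilon_X(f)\cdot 1= \sigma_X(f_{X1}^\psi\otimes \lambda^{X2}(f_{X2}))\lambda^{X1}(f_{X2})_\psi \end{gather*} for every $f\in \mathscr C(X,X)$, $X\in Ob(\mathscr C)$.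
   Context: $K$ is a field, $(U',U):=Hom_K(U',U)$. $\mathscr C$ is a coalgebra with several objects ($\delta_{XYZ}:\mathscr C(X,Z)\to\mathscr C(Y,Z)\otimes\mathscr C(X,Y)$, $f\mapsto f_{Y1}\otimes f_{Y2}$, counits $\epsilon_X$). $(\mathscr C,A,\psi)$ is an entwining structure: $A$ a $K$-algebra, $\psi_{XY}:\mathscr C(X,Y)\otimes A\to A\otimes\mathscr C(X,Y)$, $f\otimes a\mapsto a_\psi\otimes f^\psi$, with $a_\psi\otimes\delta_{XYZ}(f^\psi)=a_{\psi\psi}\otimes f_{Y1}^\psi\otimes f_{Y2}^\psi$, $(ab)_\psi\otimes f^\psi=a_\psi b_\psi\otimes f^{\psi\psi}$, $\psi(f\otimes1)=1\otimes f$, $a_\psi\epsilon_Z(g^\psi)=\epsilon_Z(g)a$. ${^\mathscr C}Ctr$ is the category of left $\mathscr C$-contramodules (vector spaces $\mathcal M(X)$ with $\pi_{XY}:(\mathscr C(X,Y),\mathcal M(Y))\to\mathcal M(X)$, coassociative and counital); ${_A^{\mathscr C}}Ctr(\psi)$ is the category of entwined contramodules (contramodules with left $A$-module structures $\mu_X:\mathcal M(X)\to(A,\mathcal M(X))$ satisfying $\mu_X\circ\pi_{XY}=(A,\pi_{XY})\circ(\psi_{XY},\mathcal M(Y))\circ(\mathscr C(X,Y),\mu_Y)$). $S_\psi$ is the forgetful functor and $T_\psi(\mathcal M)(X)=(A,\mathcal M(X))$ (contramodule structure $(A,\pi_{XY})\circ(\psi_{XY},\mathcal M(Y))$, $A$-action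 from multiplication), so $(S_\psi,T_\psi)$ is adjoint. $V_1$: collections $\sigma=\{\sigma_X:\mathscr C(X,X)\otimes A\to K\}$ with $\sigma_Y(f_{Y1}\otimes a_\psi)f_{Y2}^\psi=\sigma_X(f_{X2}\otimes a)f_{X1}$ for $f\in\mathscr C(X,Y)$, $a\in A$. $W_1$: collections $\lambda=\{\lambda^X:\mathscr C(X,X)\to A\otimes A\}$, $\lambda^X(f)=\lambda^{X1}(f)\otimes\lambda^{X2}(f)$, with $\lambda^{Y1}(f_{Y1})\otimes\lambda^{Y2}(f_{Y1})\otimes f_{Y2}=\lambda^{X1}(f_{X2})_\psi\otimes\lambda^{X2}(f_{X2})_\psi\otimes f_{X1}^{\psi\psi}$ for $f\in\mathscr C(X,Y)$ and $\lambda^{Z1}(g)\otimes\lambda^{Z2}(g)a=a_\psi\lambda^{Z1}(g^\psi)\otimes\lambda^{Z2}(g^\psi)$ for $g\in\mathscr C(Z,Z)$, $a\in A$. *)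

From HB Require Import structures.
From mathcomp Require Import all_boot all_algebra.
From mathcomp Require Import boolp classical_sets functions.
Import GRing.Theory.
Local Open Scope ring_scope.
Set Implicit Arguments. Unset Strict Implicit. Unset Printing Implicit Defensive.

Section Hom.
Variables (K : fieldType) (U V : lmodType K).
Definition linearP (f : U -> V) : Prop :=
  forall (a : K) (u v : U), f (a *: u + v) = a *: f u + f v.
Definition islin : {pred (U -> V)} := fun f => `[< linearP f >].
Fact islin_submod : submod_closed islin.
Proof.
split.
  by apply/asboolP => a u v /=; rewrite scaler0 addr0.
move=> a f g /asboolP Hf /asboolP Hg; apply/asboolP => b u v /=.
have E : forall x, (a *: f + g) x = a *: f x + g x by [].
rewrite !E Hf Hg !scalerDr !scalerA mulrC.
rewrite -!addrA; congr (_ + _); rewrite addrCA; congr (_ + _); by rewrite addrC.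
Qed.
HB.instance Definition _ := GRing.isSubmodClosed.Build K (U -> V) islin islin_submod.
Record hom := Hom { hom_fun :> U -> V; hom_lin : hom_fun \in islin }.
HB.instance Definition _ := [isSub for hom_fun].
HB.instance Definition _ := [Choice of hom by <:].
HB.instance Definition _ := [SubChoice_isSubZmodule of hom by <:].
HB.instance Definition _ := [SubZmodule_isSubLmodule of hom by <:].
Definition mkhom (f : U -> V) : hom :=
  match pselect (linearP f) with
  | left p => @Hom f (asboolT p)
  | right _ => 0
  end.
End Hom.

(* Tensors, represented by formal finite sums  sum_i u_i (x) v_i ,    *)
(* and multilinear maps.  A linear map out of U (x) V is the same as  *)
(* a bilinear map on U x V (universal property); [tapp b t] applies   *)
(* the linear map induced by the bilinear b to the tensor t.          *)

Definition tapp (U V : Type) (W : nmodType) (b : U -> V -> W)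
  (t : seq (U * V)) : W := \sum_(p <- t) b p.1 p.2.

Section Multilinear.
Variable K : fieldType.
Definition bilin (U V W : lmodType K) (b : U -> V -> W) : Prop :=
  (forall v, linearP (fun u => b u v)) /\ (forall u, linearP (b u)).
Definition trilin (U V X W : lmodType K) (g : U -> V -> X -> W) : Prop :=
  [/\ (forall v x, linearP (fun u => g u v x)),
      (forall u x, linearP (fun v => g u v x)) &
      (forall u v, linearP (g u v))].
End Multilinear.

(*   delta X Y Z : C(X,Z) -> C(Y,Z) (x) C(X,Y),   f |-> f_1 (x) f_2     *)

Unset Implicit Arguments.
Record coalg (K : fieldType) := Coalg {
  Ob : Type;
  Cm : Ob -> Ob -> lmodType K;
  delta : forall X Y Z : Ob, Cm X Z -> seq (Cm Y Z * Cm X Y);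
  eps : forall X : Ob, Cm X X -> K }.
Arguments Ob {K} c.
Arguments Cm {K c} X Y.
Arguments delta {K c} X Y Z _.
Arguments eps {K c} X _.

Section Coalg.
Variables (K : fieldType) (C : coalg K).
Local Notation Ob := (Ob C).

Definition is_coalg : Prop :=
  [/\ (* delta is a linear map into the tensor product *)
      (forall (X Y Z : Ob) (W : lmodType K) (b : Cm Y Z -> Cm X Y -> W),
         bilin b -> linearP (fun h => tapp b (delta X Y Z h))),
      (forall X : Ob, linearP (eps X : Cm X X -> K^o)),
      (* coassociativity: (delta_YZV (x) id) delta_XYV = (id (x) delta_XYZ) delta_XZV *)
      (forall (X Y Z V : Ob) (f : Cm X V) (W : lmodType K)
              (g : Cm Z V -> Cm Y Z -> Cm X Y -> W), trilin g ->
         tapp (fun g1 g2 => tapp (fun h1 h2 => g h1 h2 g2) (delta Y Z V g1))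
              (delta X Y V f)
         = tapp (fun g1 g2 => tapp (fun h1 h2 => g g1 h1 h2) (delta X Y Z g2))
              (delta X Z V f)) &
      (forall (X Y : Ob) (f : Cm X Y),
         tapp (fun g1 g2 => eps Y g1 *: g2) (delta X Y Y f) = f /\
         tapp (fun g1 g2 => eps X g2 *: g1) (delta X X Y f) = f)].

(*   psi X Y f a = psi_XY (f (x) a) = a_psi (x) f^psi  in A (x) C(X,Y)  *)

Variable A : algType K.
Variable psi : forall X Y : Ob, Cm X Y -> A -> seq (A * Cm X Y).

Definition is_entwining : Prop :=
  [/\ (* psi_XY is a linear map C(X,Y) (x) A -> A (x) C(X,Y) *)
      (forall (X Y : Ob) (W : lmodType K) (b : A -> Cm X Y -> W),
         bilin b -> bilin (fun f a => tapp b (psi X Y f a))),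
      (* a_psi (x) delta_XYZ(f^psi) = a_psipsi (x) f_Y1^psi (x) f_Y2^psi *)
      (forall (X Y Z : Ob) (f : Cm X Z) (a : A) (W : lmodType K)
              (g : A -> Cm Y Z -> Cm X Y -> W), trilin g ->
         tapp (fun a' f' => tapp (g a') (delta X Y Z f')) (psi X Z f a)
         = tapp (fun g1 g2 =>
                   tapp (fun a' g2' =>
                           tapp (fun a'' g1' => g a'' g1' g2') (psi Y Z g1 a'))
                        (psi X Y g2 a))
                (delta X Y Z f)),
      (* (ab)_psi (x) f^psi = a_psi b_psi (x) f^psipsi  (f passes a first) *)
      (forall (X Y : Ob) (f : Cm X Y) (a b : A) (W : lmodType K)
              (be : A -> Cm X Y -> W), bilin be ->
         tapp be (psi X Y f (a * b))
         = tapp (fun a' f' => tapp (fun b' f'' => be (a' * b') f'') (psi X Y f' b))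
                (psi X Y f a)),
      (forall (X Y : Ob) (f : Cm X Y) (W : lmodType K)
              (be : A -> Cm X Y -> W), bilin be ->
         tapp be (psi X Y f 1) = be 1 f) &
      (forall (Z : Ob) (g : Cm Z Z) (a : A),
         tapp (fun a' g' => eps Z g' *: a') (psi Z Z g a) = eps Z g *: a)].

(* Hom_K(U,V) is [hom U V]; [mkhom f] packages a linear function f as *)
(* an element of [hom U V] (it is only applied to linear functions).  *)

Record ctr := Ctr {
  cM : Ob -> lmodType K;
  cpi : forall X Y : Ob, hom (hom (Cm X Y) (cM Y)) (cM X) }.

Definition is_ctr (M : ctr) : Prop :=
  (* coassociativity: pi_XY o (C(X,Y), pi_YZ) = pi_XZ o (delta_XYZ, M(Z)),
     tested on all phi in Hom(C(Y,Z) (x) C(X,Y), M(Z)) = bilinear maps *)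
  (forall (X Y Z : Ob) (phi : Cm Y Z -> Cm X Y -> cM M Z), bilin phi ->
     cpi M X Y (mkhom (fun f => cpi M Y Z (mkhom (fun g => phi g f))))
     = cpi M X Z (mkhom (fun h => tapp phi (delta X Y Z h)))) /\
  (forall (X : Ob) (m : cM M X), cpi M X X (mkhom (fun f => eps X f *: m)) = m).

Record ent := Ent {
  ectr : ctr;
  eact : forall X : Ob, A -> cM ectr X -> cM ectr X }.

Definition is_ent (N : ent) : Prop :=
  [/\ is_ctr (ectr N),
      (* mu_X : M(X) -> Hom(A, M(X)) linear, with linear values *)
      (forall X : Ob, bilin (eact N X)),
      (forall (X : Ob) (a b : A) (m : cM (ectr N) X),
         eact N X (a * b) m = eact N X a (eact N X b m)),
      (forall (X : Ob) (m : cM (ectr N) X), eact N X 1 m = m) &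
      (* mu_X o pi_XY = (A, pi_XY) o (psi_XY, M(Y)) o (C(X,Y), mu_Y) *)
      (forall (X Y : Ob) (phi : hom (Cm X Y) (cM (ectr N) Y)) (a : A),
         eact N X a (cpi (ectr N) X Y phi)
         = cpi (ectr N) X Y
             (mkhom (fun c => tapp (fun a' c' => eact N Y a' (phi c')) (psi X Y c a))))].

Definition is_ctr_mor (M N : ctr) (h : forall X : Ob, hom (cM M X) (cM N X)) : Prop :=
  forall (X Y : Ob) (phi : hom (Cm X Y) (cM M Y)),
    h X (cpi M X Y phi) = cpi N X Y (mkhom (fun c => h Y (phi c))).

Definition is_ent_mor (M N : ent)
  (h : forall X : Ob, hom (cM (ectr M) X) (cM (ectr N) X)) : Prop :=
  is_ctr_mor (ectr M) (ectr N) h /\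
  forall (X : Ob) (a : A) (m : cM (ectr M) X), h X (eact M X a m) = eact N X a (h X m).

Definition S_obj (N : ent) : ctr := ectr N.

Definition T_obj (M : ctr) : ent :=
  @Ent (@Ctr (fun X => hom A (cM M X))
          (fun X Y => mkhom (fun phi : hom (Cm X Y) (hom A (cM M Y)) =>
             mkhom (fun a => cpi M X Y
               (mkhom (fun c => tapp (fun a' c' => phi c' a') (psi X Y c a)))))))
       (fun X b g => mkhom (fun a => g (a * b))).

Definition T_mor (M N : ctr) (h : forall X : Ob, hom (cM M X) (cM N X)) :
  forall X : Ob, hom (hom A (cM M X)) (hom A (cM N X)) :=
  fun X => mkhom (fun g : hom A (cM M X) => mkhom (fun a => h X (g a))).

Definition T_left_adjoint_S : Prop :=
  exists (eta : forall (M : ctr) (X : Ob), hom (cM M X) (hom A (cM M X)))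
         (epsT : forall (N : ent) (X : Ob),
                   hom (hom A (cM (ectr N) X)) (cM (ectr N) X)),
  [/\ (forall M : ctr, is_ctr M -> is_ctr_mor M (S_obj (T_obj M)) (eta M)),
      (forall N : ent, is_ent N -> is_ent_mor (T_obj (S_obj N)) N (epsT N)),
      (forall (M M' : ctr) (h : forall X : Ob, hom (cM M X) (cM M' X)),
         is_ctr M -> is_ctr M' -> is_ctr_mor M M' h ->
         forall (X : Ob) (m : cM M X), T_mor M M' h X (eta M X m) = eta M' X (h X m)) &
      (forall (N N' : ent) (k : forall X : Ob, hom (cM (ectr N) X) (cM (ectr N') X)),
         is_ent N -> is_ent N' -> is_ent_mor N N' k ->
         forall (X : Ob) (g : hom A (cM (ectr N) X)),
           epsT N' X (T_mor (ectr N) (ectr N') k X g) = k X (epsT N X g))]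
  /\
  [/\ (forall M : ctr, is_ctr M ->
         forall (X : Ob) (g : hom A (cM M X)),
           epsT (T_obj M) X (T_mor M (S_obj (T_obj M)) (eta M) X g) = g) &
      (forall N : ent, is_ent N ->
         forall (X : Ob) (m : cM (ectr N) X), epsT N X (eta (ectr N) X m) = m)].

Definition in_V1 (sigma : forall X : Ob, Cm X X -> A -> K) : Prop :=
  (forall X : Ob, bilin (sigma X : Cm X X -> A -> K^o)) /\
  (forall (X Y : Ob) (f : Cm X Y) (a : A),
     tapp (fun g1 g2 =>
             tapp (fun a' g2' => sigma Y g1 a' *: g2') (psi X Y g2 a))
          (delta X Y Y f)
     = tapp (fun g1 g2 => sigma X g2 a *: g1) (delta X X Y f)).

Definition in_W1 (lam : forall X : Ob, Cm X X -> seq (A * A)) : Prop :=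
  [/\ (forall (X : Ob) (W : lmodType K) (b : A -> A -> W),
         bilin b -> linearP (fun g => tapp b (lam X g))),
      (forall (X Y : Ob) (f : Cm X Y) (W : lmodType K)
              (g : A -> A -> Cm X Y -> W), trilin g ->
         tapp (fun g1 g2 => tapp (fun l1 l2 => g l1 l2 g2) (lam Y g1))
              (delta X Y Y f)
         = tapp (fun g1 g2 =>
                   tapp (fun l1 l2 =>
                           tapp (fun l1' g1' =>
                                   tapp (fun l2' g1'' => g l1' l2' g1'')
                                        (psi X Y g1' l2))
                                (psi X Y g1 l1))
                        (lam X g2))
                (delta X X Y f)) &
      (forall (Z : Ob) (g : Cm Z Z) (a : A) (W : lmodType K)
              (b : A -> A -> W), bilin b ->
         tapp (fun l1 l2 => b l1 (l2 * a)) (lam Z g)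
         = tapp (fun a' g' => tapp (fun l1 l2 => b (a' * l1) l2) (lam Z g'))
                (psi Z Z g a))].

End Coalg.
Arguments is_coalg {K} C.
Arguments is_entwining {K C A} psi.
Arguments ctr {K} C.
Arguments T_left_adjoint_S {K C A} psi.
Arguments in_V1 {K C A} psi sigma.
Arguments in_W1 {K C A} psi lam.

(* Given sigma and lambda, the unit eta_M(m)(a) = pi_XX(f |-> sigma_X(f (x) a) m)
   and the counit eps_N(g) = pi_XX(f |-> lambda^X1(f) g(lambda^X2(f))) are
   morphisms because of the V_1 and W_1 conditions, naturality is automatic,
   and the two normalisation identities give the two triangle identities.
   Conversely, given an adjunction (eta, eps), put
   sigma_X(f (x) a) = eta(eps_X)(a)(f) on the free contramodule Hom(C(-,X), K)
   and lambda^X(f) = eps(gen)(f) on the free entwined contramodule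
   Hom(C(-,X), A (x) A), generated by gen(a)(c) = eps_X(c) 1 (x) a.  By
   naturality along the morphisms out of these free objects (a Yoneda
   argument), eta and eps must be given by the formulas above; evaluating the
   morphism properties and triangle identities of eta and eps on suitable free
   objects then yields V_1, W_1 and the two identities. *)

From Pilot Require Import Defs.
From HB Require Import structures.
From mathcomp Require Import all_boot all_algebra.
From mathcomp Require Import boolp classical_sets functions.
Import GRing.Theory.
Local Open Scope ring_scope.
Set Implicit Arguments. Unset Strict Implicit. Unset Printing Implicit Defensive.

Local Notation linearP := Defs.linearP.
Local Notation hom := Defs.hom.

Section LinearMaps.
Variable K : fieldType.
Implicit Types U V W : lmodType K.

Lemma linPD U V (f : U -> V) : linearP f -> forall x y, f (x + y) = f x + f y.
Proof. by move=> fP x y; have := fP 1 x y; rewrite !scale1r. Qed.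

Lemma linP0 U V (f : U -> V) : linearP f -> f 0 = 0.
Proof. by move=> fP; apply: (addIr (f 0)); rewrite -linPD // !add0r. Qed.

Lemma linPZ U V (f : U -> V) : linearP f -> forall k x, f (k *: x) = k *: f x.
Proof. by move=> fP k x; rewrite -[k *: x]addr0 fP linP0 // addr0. Qed.

Lemma linP_comp U V W (f : V -> W) (g : U -> V) :
  linearP f -> linearP g -> linearP (fun u => f (g u)).
Proof. by move=> fP gP k x y; rewrite gP fP. Qed.

Lemma linP_scale U W (e : U -> K^o) (w : W) :
  linearP e -> linearP (fun u => e u *: w).
Proof. by move=> eP k x y; rewrite eP scalerDl -scalerA. Qed.

Lemma linP_scalar W (w : W) : linearP (fun k : K^o => k *: w).
Proof. by move=> k x y; rewrite scalerDl scalerA. Qed.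

Lemma linP_scaler W (k : K) : linearP (fun w : W => k *: w).
Proof. by move=> c x y; rewrite scalerDr !scalerA mulrC. Qed.

Lemma linP_mulr (A : algType K) (a : A) : linearP (fun x : A => x * a).
Proof. by move=> k x y; rewrite mulrDl -scalerAl. Qed.

Lemma linP_mull (A : algType K) (a : A) : linearP (fun x : A => a * x).
Proof. by move=> k x y; rewrite mulrDr -scalerAr. Qed.

Lemma tapp_nil (T1 T2 : Type) (W : nmodType) (b : T1 -> T2 -> W) : tapp b [::] = 0.
Proof. by rewrite /tapp big_nil. Qed.

Lemma tapp_cat (T1 T2 : Type) (W : nmodType) (b : T1 -> T2 -> W) s t :
  tapp b (s ++ t) = tapp b s + tapp b t.
Proof. by rewrite /tapp big_cat. Qed.

Lemma tapp_seq1 (T1 T2 : Type) (W : nmodType) (b : T1 -> T2 -> W) x y :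
  tapp b [:: (x, y)] = b x y.
Proof. by rewrite /tapp big_seq1. Qed.

Lemma eq_tapp (T1 T2 : Type) (W : nmodType) (b1 b2 : T1 -> T2 -> W) s :
  (forall x y, b1 x y = b2 x y) -> tapp b1 s = tapp b2 s.
Proof. by move=> eqb; apply: eq_bigr => p _; rewrite eqb. Qed.

Lemma tappD (T1 T2 : Type) (W : nmodType) (b1 b2 : T1 -> T2 -> W) s :
  tapp (fun x y => b1 x y + b2 x y) s = tapp b1 s + tapp b2 s.
Proof. by rewrite /tapp big_split. Qed.

Lemma tappZ (T1 T2 : Type) W (k : K) (b : T1 -> T2 -> W) s :
  tapp (fun x y => k *: b x y) s = k *: tapp b s.
Proof. by rewrite /tapp scaler_sumr. Qed.

Lemma linP_tapp (T1 T2 : Type) W W' (L : W -> W') (b : T1 -> T2 -> W) s :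
  linearP L -> L (tapp b s) = tapp (fun x y => L (b x y)) s.
Proof. by move=> LP; rewrite /tapp (big_morph L (linPD LP) (linP0 LP)). Qed.

Lemma tapp_linP (T1 T2 : Type) U W (b : U -> T1 -> T2 -> W) s :
  (forall x y, linearP (fun u => b u x y)) -> linearP (fun u => tapp (b u) s).
Proof. by move=> bP k u v; rewrite -tappZ -tappD; apply: eq_tapp => x y; apply: bP. Qed.

Lemma homP U V (h : hom U V) : linearP h.
Proof. by case: h => f /= /asboolP. Qed.

Lemma homZ U V (h : hom U V) k x : h (k *: x) = k *: h x.
Proof. exact/linPZ/homP. Qed.

Lemma scalehE U V k (h : hom U V) x : (k *: h) x = k *: h x.
Proof. by []. Qed.

Lemma hom_ext U V (h1 h2 : hom U V) : h1 =1 h2 -> h1 = h2.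
Proof. by move=> eqh; apply/val_inj/funext. Qed.

Lemma mkhomE U V (f : U -> V) : linearP f -> mkhom f =1 f.
Proof. by move=> fP x; rewrite /mkhom; case: pselect. Qed.

Lemma eq_mkhom U V (f g : U -> V) : f =1 g -> mkhom f = mkhom g.
Proof. by move=> eqfg; congr mkhom; apply: funext. Qed.

Lemma tapp_homE (T1 T2 : Type) U V (b : T1 -> T2 -> hom U V) s x :
  tapp b s x = tapp (fun u v => b u v x) s.
Proof. exact: (linP_tapp (L := fun h : hom U V => h x)). Qed.

Lemma linP_pointwise U V W (F : U -> hom V W) :
  (forall v, linearP (fun u => F u v)) -> linearP F.
Proof. by move=> FP k x y; apply: hom_ext => v; apply: (etrans (FP v k x y)). Qed.

Lemma linP_eval U V W (F : U -> hom V W) v :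
  linearP F -> linearP (fun u => F u v).
Proof. by move=> FP k x y; rewrite FP. Qed.

Lemma homP_eval U V W (F : hom U (hom V W)) v : linearP (fun u => F u v).
Proof. exact/linP_eval/homP. Qed.

Lemma mkhom_linP U V W (F : U -> V -> W) :
  (forall u, linearP (F u)) -> (forall v, linearP (fun u => F u v)) ->
  linearP (fun u => mkhom (F u)).
Proof.
move=> FPr FPl; apply: linP_pointwise => v k x y.
by rewrite !mkhomE // FPl.
Qed.

Lemma tapp_mkhom (T1 T2 : Type) U W (F : T1 -> T2 -> U -> W) s :
  (forall x y, linearP (F x y)) ->
  tapp (fun x y => mkhom (F x y)) s = mkhom (fun v => tapp (fun x y => F x y v) s).
Proof.
move=> FP; apply: hom_ext => v; rewrite tapp_homE mkhomE.
  by apply: eq_tapp => x y; rewrite mkhomE.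
exact: tapp_linP.
Qed.

Definition hom2 U V W (F : U -> V -> W) : hom U (hom V W) := mkhom (fun u => mkhom (F u)).

Lemma hom2E U V W (F : U -> V -> W) : bilin F -> forall u v, hom2 F u v = F u v.
Proof. by move=> [FPl FPr] u v; rewrite /hom2 !mkhomE //; apply: mkhom_linP. Qed.

End LinearMaps.

Section Tensor.
Variables (K : fieldType) (U V : lmodType K).
Implicit Types s t : seq (U * V).

Definition tensor_equiv s t : Prop :=
  forall (W : lmodType K) (b : U -> V -> W), bilin b -> tapp b s = tapp b t.

Lemma tensor_equiv_sym s t : tensor_equiv s t -> tensor_equiv t s.
Proof. by move=> st W b bb; rewrite st. Qed.

Lemma tensor_equiv_trans s t r :
  tensor_equiv s t -> tensor_equiv t r -> tensor_equiv s r.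
Proof. by move=> st tr W b bb; rewrite st // tr. Qed.

Fact tensor_equiv_ex t : exists s, `[< tensor_equiv s t >].
Proof. by exists t; apply/asboolP. Qed.

(* A canonical representative of the class of [t]: tensors are then a subtype
   of [seq (U * V)] rather than a quotient. *)
Definition tnorm t : seq (U * V) := xchoose (tensor_equiv_ex t).

Lemma tnormP t : tensor_equiv (tnorm t) t.
Proof. exact/asboolP/(xchooseP (tensor_equiv_ex t)). Qed.

Lemma tnorm_equiv s t : tensor_equiv s t -> tnorm s = tnorm t.
Proof.
move=> st; apply: eq_xchoose => r; apply/asboolP/asboolP => rs.
  exact: tensor_equiv_trans rs st.
exact: tensor_equiv_trans rs (tensor_equiv_sym st).
Qed.

Lemma tnorm_idem t : tnorm (tnorm t) == tnorm t.
Proof. exact/eqP/tnorm_equiv/tnormP. Qed.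

Record tensor := Tensor { tseq : seq (U * V); _ : tnorm tseq == tseq }.
HB.instance Definition _ := [isSub for tseq].
HB.instance Definition _ := [Choice of tensor by <:].

Definition tensor_of t : tensor := Tensor (tnorm_idem t).

Lemma tensor_of_equiv s t : tensor_equiv s t -> tensor_of s = tensor_of t.
Proof. by move=> st; apply: val_inj; apply: tnorm_equiv. Qed.

Lemma tapp_tensor_of (W : lmodType K) (b : U -> V -> W) t :
  bilin b -> tapp b (tseq (tensor_of t)) = tapp b t.
Proof. exact: tnormP. Qed.

Lemma tseqK x : tensor_of (tseq x) = x.
Proof. by case: x => s sP; apply: val_inj; apply/eqP. Qed.

Definition tscale_seq k s := map (fun p => (k *: p.1, p.2)) s.

Lemma tapp_tscale_seq (W : lmodType K) (b : U -> V -> W) k s :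
  bilin b -> tapp b (tscale_seq k s) = k *: tapp b s.
Proof.
move=> [bPl _]; rewrite /tapp big_map scaler_sumr.
by apply: eq_bigr => p _; apply: (linPZ (bPl p.2)).
Qed.

Definition tadd x y := tensor_of (tseq x ++ tseq y).
Definition tzero := tensor_of [::].
Definition topp x := tensor_of (tscale_seq (-1) (tseq x)).
Definition tscale k x := tensor_of (tscale_seq k (tseq x)).

Let tapp_tensorE := (tapp_cat, tapp_nil, tapp_tensor_of, tapp_tscale_seq).

Lemma taddA : associative tadd.
Proof. by move=> x y z; apply: tensor_of_equiv => W b bb; rewrite !tapp_tensorE // addrA. Qed.

Lemma taddC : commutative tadd.
Proof. by move=> x y; apply: tensor_of_equiv => W b bb; rewrite !tapp_tensorE // addrC. Qed.

Lemma tadd0 : left_id tzero tadd.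
Proof.
move=> x; rewrite -[RHS]tseqK; apply: tensor_of_equiv => W b bb.
by rewrite !tapp_tensorE // add0r.
Qed.

Lemma taddN : left_inverse tzero topp tadd.
Proof.
move=> x; apply: tensor_of_equiv => W b bb.
by rewrite !tapp_tensorE // scaleN1r addNr.
Qed.

HB.instance Definition _ := GRing.isZmodule.Build tensor taddA taddC tadd0 taddN.

Lemma tscaleA a b x : tscale a (tscale b x) = tscale (a * b) x.
Proof. by apply: tensor_of_equiv => W be bb; rewrite !tapp_tensorE // scalerA. Qed.

Lemma tscale1 : left_id 1 tscale.
Proof.
move=> x; rewrite -[RHS]tseqK; apply: tensor_of_equiv => W b bb.
by rewrite !tapp_tensorE // scale1r.
Qed.

Lemma tscaleDr : right_distributive tscale +%R.
Proof. by move=> k x y; apply: tensor_of_equiv => W b bb; rewrite !tapp_tensorE // scalerDr. Qed.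

Lemma tscaleDl x : {morph tscale^~ x : a b / a + b}.
Proof. by move=> a b; apply: tensor_of_equiv => W be bb; rewrite !tapp_tensorE // scalerDl. Qed.

HB.instance Definition _ :=
  GRing.Zmodule_isLmodule.Build K tensor tscaleA tscale1 tscaleDr tscaleDl.

Definition tens u v : tensor := tensor_of [:: (u, v)].

Definition tlift (W : lmodType K) (b : U -> V -> W) (x : tensor) : W := tapp b (tseq x).

Lemma tlift_linP (W : lmodType K) (b : U -> V -> W) : bilin b -> linearP (tlift b).
Proof. by move=> bb k x y; rewrite /tlift !tapp_tensorE. Qed.

Lemma tlift_tens (W : lmodType K) (b : U -> V -> W) u v :
  bilin b -> tlift b (tens u v) = b u v.
Proof. by move=> bb; rewrite /tlift tapp_tensor_of // tapp_seq1. Qed.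

Lemma tensor_of_tapp t : tensor_of t = tapp tens t.
Proof.
elim: t => [|p t IHt]; first by rewrite tapp_nil.
rewrite [tapp _ _]/tapp big_cons -[\sum_(_ <- _) _]/(tapp tens t) -IHt.
by apply: tensor_of_equiv => W b bb; rewrite !tapp_tensorE // tapp_seq1 /tapp big_cons.
Qed.

Lemma tensor_ind (W : lmodType K) (f g : tensor -> W) : linearP f -> linearP g ->
  (forall u v, f (tens u v) = g (tens u v)) -> f =1 g.
Proof.
move=> fP gP eqfg x; rewrite -(tseqK x) tensor_of_tapp.
by rewrite (linP_tapp _ _ fP) (linP_tapp _ _ gP); apply: eq_tapp.
Qed.

Lemma tens_bilin : bilin tens.
Proof.
by split=> [v|u] k x y; apply: tensor_of_equiv => W b [bPl bPr];
  rewrite !tapp_tensorE // ?tapp_seq1 ?(bPl, bPr) //; split.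
Qed.

End Tensor.

Section LeftMultiplication.
Variables (K : fieldType) (A : algType K).
Local Notation AA := (tensor A A).

Lemma tens_mull_bilin a : bilin (fun x y : A => tens (a * x) y).
Proof.
have [tPl tPr] := tens_bilin A A.
by split=> [y|x]; [apply: linP_comp (tPl y) (linP_mull a) | apply: tPr].
Qed.

Definition tmull (a : A) : AA -> AA := tlift (fun x y => tens (a * x) y).

Lemma tmull_linP a : linearP (tmull a).
Proof. exact/tlift_linP/tens_mull_bilin. Qed.

Lemma tmull_tens a x y : tmull a (tens x y) = tens (a * x) y.
Proof. exact/tlift_tens/tens_mull_bilin. Qed.

Lemma tmull_linPl t : linearP (fun a => tmull a t).
Proof.
apply: tapp_linP => x y; have [tPl _] := tens_bilin A A.
exact: linP_comp (tPl y) (linP_mulr x).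
Qed.

Lemma tmullM a b t : tmull (a * b) t = tmull a (tmull b t).
Proof.
apply: (tensor_ind (f := tmull (a * b)) (g := fun t => tmull a (tmull b t))).
- exact: tmull_linP.
- exact: linP_comp (tmull_linP a) (tmull_linP b).
- by move=> x y; rewrite !tmull_tens mulrA.
Qed.

Lemma tmull1 t : tmull 1 t = t.
Proof.
apply: (tensor_ind (f := tmull 1) (g := id)) => // [|x y].
  exact: tmull_linP.
by rewrite tmull_tens mul1r.
Qed.

End LeftMultiplication.

Section Entwining.
Unset Implicit Arguments.
Variables (K : fieldType) (C : coalg K) (A : algType K)
  (psi : forall X Y : Ob C, Cm X Y -> A -> seq (A * Cm X Y)).
Set Implicit Arguments.
Hypothesis Ccoalg : is_coalg C.
Hypothesis psi_entw : is_entwining psi.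
Local Notation Ob := (Ob C).
Local Notation cM := (cM K C).
Local Notation cpi := (cpi K C).
Local Notation ectr := (ectr K C A).
Local Notation eact := (eact K C A).
Local Notation ent := (ent K C A).
Local Notation T_obj := (T_obj K C A psi).
Local Notation T_mor := (T_mor K C A).
Local Notation S_obj := (S_obj K C A).
Local Notation is_ctr := (is_ctr K C).
Local Notation is_ent := (is_ent K C A psi).
Local Notation is_ctr_mor := (is_ctr_mor K C).
Local Notation is_ent_mor := (is_ent_mor K C A).

Lemma delta_linP (X Y Z : Ob) (W : lmodType K) (b : Cm Y Z -> Cm X Y -> W) :
  bilin b -> linearP (fun h => tapp b (delta X Y Z h)).
Proof. by case: Ccoalg => dP _ _ _; apply: dP. Qed.

Lemma eps_smul_linP (X : Ob) (W : lmodType K) (w : W) : linearP (fun f => eps X f *: w).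
Proof. by apply: linP_scale; case: Ccoalg => _ eP _ _; apply: eP. Qed.

Definition eps_scale (X : Ob) {W : lmodType K} : hom W (hom (Cm X X) W) :=
  hom2 (fun w f => eps X f *: w).

Lemma eps_scaleE X (W : lmodType K) (w : W) f : eps_scale X w f = eps X f *: w.
Proof. by rewrite hom2E //; split=> [f'|w']; [apply: linP_scaler | apply: eps_smul_linP]. Qed.

Lemma coassoc (X Y Z V : Ob) (f : Cm X V) (W : lmodType K)
   (g : Cm Z V -> Cm Y Z -> Cm X Y -> W) : trilin g ->
   tapp (fun g1 g2 => tapp (fun h1 h2 => g h1 h2 g2) (delta Y Z V g1)) (delta X Y V f)
   = tapp (fun g1 g2 => tapp (fun h1 h2 => g g1 h1 h2) (delta X Y Z g2)) (delta X Z V f).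
Proof. by case: Ccoalg => _ _ cP _; apply: cP. Qed.

Lemma counitl (X Y : Ob) (f : Cm X Y) (W : lmodType K) (L : Cm X Y -> W) :
  linearP L -> tapp (fun g1 g2 => eps Y g1 *: L g2) (delta X Y Y f) = L f.
Proof.
case: Ccoalg => _ _ _ /(_ X Y f) [epsl _] LP.
by rewrite -{2}epsl (linP_tapp _ _ LP); apply: eq_tapp => x y; rewrite (linPZ LP).
Qed.

Lemma counitr (X Y : Ob) (f : Cm X Y) (W : lmodType K) (L : Cm X Y -> W) :
  linearP L -> tapp (fun g1 g2 => eps X g2 *: L g1) (delta X X Y f) = L f.
Proof.
case: Ccoalg => _ _ _ /(_ X Y f) [_ epsr] LP.
by rewrite -{2}epsr (linP_tapp _ _ LP); apply: eq_tapp => x y; rewrite (linPZ LP).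
Qed.

Lemma psi_bilin (X Y : Ob) (W : lmodType K) (b : A -> Cm X Y -> W) :
  bilin b -> bilin (fun f a => tapp b (psi X Y f a)).
Proof. by case: psi_entw => pP _ _ _ _; apply: pP. Qed.

Lemma psi_linPl (X Y : Ob) (W : lmodType K) (b : A -> Cm X Y -> W) a :
  bilin b -> linearP (fun f => tapp b (psi X Y f a)).
Proof. by move=> /psi_bilin[pPl _]; apply: pPl. Qed.

Lemma psi_linPr (X Y : Ob) (W : lmodType K) (b : A -> Cm X Y -> W) f :
  bilin b -> linearP (fun a => tapp b (psi X Y f a)).
Proof. by move=> /psi_bilin[_ pPr]; apply: pPr. Qed.

Lemma psi_delta (X Y Z : Ob) (f : Cm X Z) (a : A) (W : lmodType K)
  (g : A -> Cm Y Z -> Cm X Y -> W) : trilin g ->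
  tapp (fun a' f' => tapp (g a') (delta X Y Z f')) (psi X Z f a)
  = tapp (fun g1 g2 =>
        tapp (fun a' g2' => tapp (fun a'' g1' => g a'' g1' g2') (psi Y Z g1 a'))
             (psi X Y g2 a))
      (delta X Y Z f).
Proof. by case: psi_entw => _ pP _ _ _; apply: pP. Qed.

Lemma psi_mul (X Y : Ob) (f : Cm X Y) (a b : A) (W : lmodType K)
  (be : A -> Cm X Y -> W) : bilin be ->
  tapp be (psi X Y f (a * b))
  = tapp (fun a' f' => tapp (fun b' f'' => be (a' * b') f'') (psi X Y f' b))
         (psi X Y f a).
Proof. by case: psi_entw => _ _ pP _ _; apply: pP. Qed.

Lemma psi_one (X Y : Ob) (f : Cm X Y) (W : lmodType K) (be : A -> Cm X Y -> W) :
  bilin be -> tapp be (psi X Y f 1) = be 1 f.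
Proof. by case: psi_entw => _ _ _ pP _; apply: pP. Qed.

Lemma psi_eps (Z : Ob) (g : Cm Z Z) (a : A) (W : lmodType K) (L : A -> W) :
  linearP L -> tapp (fun a' g' => eps Z g' *: L a') (psi Z Z g a) = eps Z g *: L a.
Proof.
case: psi_entw => _ _ _ _ /(_ Z g a) pe LP.
by rewrite -(linPZ LP) -pe (linP_tapp _ _ LP); apply: eq_tapp => x y; rewrite (linPZ LP).
Qed.

Lemma ctr_coassoc (M : ctr C) (X Y Z : Ob) (phi : Cm Y Z -> Cm X Y -> cM M Z) :
  is_ctr M -> bilin phi ->
  cpi M X Y (mkhom (fun f => cpi M Y Z (mkhom (fun g => phi g f))))
  = cpi M X Z (mkhom (fun h => tapp phi (delta X Y Z h))).
Proof. by case=> cP _; apply: cP. Qed.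

Lemma ctr_counit (M : ctr C) (X : Ob) (m : cM M X) :
  is_ctr M -> cpi M X X (mkhom (fun f => eps X f *: m)) = m.
Proof. by case=> _ cP; apply: cP. Qed.

Lemma eq_cpi (M : ctr C) X Y (f g : Cm X Y -> cM M Y) :
  f =1 g -> cpi M X Y (mkhom f) = cpi M X Y (mkhom g).
Proof. by move/eq_mkhom->. Qed.

Lemma tapp_cpi (M : ctr C) X Y (T1 T2 : Type) (F : T1 -> T2 -> Cm X Y -> cM M Y) s :
  (forall x y, linearP (F x y)) ->
  tapp (fun x y => cpi M X Y (mkhom (F x y))) s
  = cpi M X Y (mkhom (fun c => tapp (fun x y => F x y c) s)).
Proof. by move=> FP; rewrite -(linP_tapp _ _ (homP _)) tapp_mkhom. Qed.

Section EntwinedContramodule.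
Variables (N : ent) (HN : is_ent N).

Lemma ent_ctr : is_ctr (ectr N).
Proof. by case: HN. Qed.

Lemma ent_bilin X : bilin (eact N X).
Proof. by case: HN => _ eP _ _ _; apply: eP. Qed.

Lemma ent_linPl X m : linearP (fun a => eact N X a m).
Proof. by have [eP _] := ent_bilin X; apply: eP. Qed.

Lemma ent_linPr X a : linearP (eact N X a).
Proof. by have [_ eP] := ent_bilin X; apply: eP. Qed.

Lemma ent_actM X a b m : eact N X (a * b) m = eact N X a (eact N X b m).
Proof. by case: HN => _ _ eP _ _; apply: eP. Qed.

Lemma ent_act1 X m : eact N X 1 m = m.
Proof. by case: HN => _ _ _ eP _; apply: eP. Qed.

Lemma ent_act_pi X Y (phi : hom (Cm X Y) (cM (ectr N) Y)) a :
  eact N X a (cpi (ectr N) X Y phi)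
  = cpi (ectr N) X Y
      (mkhom (fun c => tapp (fun a' c' => eact N Y a' (phi c')) (psi X Y c a))).
Proof. by case: HN => _ _ _ _ eP; apply: eP. Qed.

Lemma ent_act_hom_bilin (U : lmodType K) X (g : hom U (cM (ectr N) X)) :
  bilin (fun a b => eact N X a (g b)).
Proof. by split=> [b|a]; [apply: ent_linPl | apply: linP_comp (ent_linPr a) (homP g)]. Qed.

End EntwinedContramodule.

Lemma T_morE (M N : ctr C) (h : forall X, hom (cM M X) (cM N X)) X g a :
  T_mor M N h X g a = h X (g a).
Proof.
have hgP : forall g : hom A (cM M X), linearP (fun a => h X (g a)).
  by move=> g'; apply: linP_comp (homP _) (homP g').
rewrite /T_mor !mkhomE //; apply: linP_pointwise => a' k x y.
by rewrite !mkhomE // homP.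
Qed.

Section FreeContramodule.
Variables (V : lmodType K) (X0 : Ob).

Definition free_pi Y Z (Phi : hom (Cm Y Z) (hom (Cm Z X0) V)) : hom (Cm Y X0) V :=
  mkhom (fun h => tapp (fun h1 h2 => Phi h2 h1) (delta Y Z X0 h)).

Definition free_ctr : ctr C :=
  Ctr K C (fun Y => hom (Cm Y X0) V) (fun Y Z => mkhom (@free_pi Y Z)).

Lemma free_pi_bilin Y Z (Phi : hom (Cm Y Z) (hom (Cm Z X0) V)) :
  bilin (fun h1 h2 => Phi h2 h1).
Proof. by split=> [h2|h1]; [apply: homP | apply: homP_eval]. Qed.

Lemma free_piE Y Z (Phi : hom (Cm Y Z) (cM free_ctr Z)) h :
  cpi free_ctr Y Z Phi h = tapp (fun h1 h2 => Phi h2 h1) (delta Y Z X0 h).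
Proof.
have piE : forall Phi' h', free_pi Phi' h' = tapp (fun h1 h2 => Phi' h2 h1) (delta Y Z X0 h').
  by move=> Phi' h'; rewrite /free_pi mkhomE //; apply/delta_linP/free_pi_bilin.
rewrite /= mkhomE ?piE //; apply: linP_pointwise => h' k x y.
by rewrite !piE -tappZ -tappD.
Qed.

Lemma free_ctr_is_ctr : is_ctr free_ctr.
Proof.
split=> [X Y Z phi [phiPl phiPr] | X m].
  apply: hom_ext => h; rewrite !free_piE.
  have piP : linearP (fun f => cpi free_ctr Y Z (mkhom (fun g => phi g f))).
    apply: linP_comp (homP _) _.
    exact: (mkhom_linP (F := fun f g => phi g f)).
  have deltaP : linearP (fun h0 : Cm X Z => tapp phi (delta X Y Z h0)).
    exact: delta_linP.
  under eq_tapp => h1 h2 do (rewrite mkhomE // free_piE;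
    under eq_tapp => k1 k2 do (rewrite mkhomE; last exact: phiPl)).
  under [in RHS]eq_tapp => h1 h2 do rewrite mkhomE // tapp_homE.
  apply: (coassoc h (g := fun k1 k2 g2 => phi k2 g2 k1)).
  split=> [v x|u x|u v]; [exact: homP | exact/linP_eval/phiPl | exact/linP_eval/phiPr].
apply: hom_ext => h; rewrite free_piE -(counitr h (homP m)).
by apply: eq_tapp => h1 h2; rewrite mkhomE //; apply: eps_smul_linP.
Qed.

End FreeContramodule.

Section TContramodule.
Variable M : ctr C.

Lemma T_pi_bilin X Y (phi : hom (Cm X Y) (hom A (cM M Y))) :
  bilin (fun a c => phi c a).
Proof. by split=> [c|a]; [apply: homP | apply: homP_eval]. Qed.

Lemma T_pi_inner_linP X Y (phi : hom (Cm X Y) (hom A (cM M Y))) :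
  linearP (fun a => cpi M X Y (mkhom (fun c => tapp (fun a' c' => phi c' a') (psi X Y c a)))).
Proof.
apply: linP_comp (homP _) _.
apply: (mkhom_linP (F := fun a c => tapp (fun a' c' => phi c' a') (psi X Y c a))) => [a|c].
  exact/psi_linPl/T_pi_bilin.
exact/psi_linPr/T_pi_bilin.
Qed.

Lemma T_piE X Y (phi : hom (Cm X Y) (hom A (cM M Y))) a :
  cpi (ectr (T_obj M)) X Y phi a
  = cpi M X Y (mkhom (fun c => tapp (fun a' c' => phi c' a') (psi X Y c a))).
Proof.
rewrite /= !mkhomE //; first exact: T_pi_inner_linP.
apply: mkhom_linP => [phi'|a']; first exact: T_pi_inner_linP.
apply: linP_comp (homP _) _.
apply: (mkhom_linP (F := fun (phi' : hom (Cm X Y) (hom A (cM M Y))) c =>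
  tapp (fun a'' c' => phi' c' a'') (psi X Y c a'))) => [phi'|c].
  exact/psi_linPl/T_pi_bilin.
by apply: tapp_linP => a'' c'; do 2!apply: linP_eval.
Qed.

Lemma T_actE X b (g : hom A (cM M X)) a : eact (T_obj M) X b g a = g (a * b).
Proof. by rewrite /= mkhomE //; apply: linP_comp (homP g) (linP_mulr b). Qed.

Lemma T_act_bilin X : bilin (eact (T_obj M) X).
Proof.
split=> [g|b]; apply: linP_pointwise => a k x y; rewrite !T_actE //.
by rewrite (linP_mull a) homP.
Qed.

Lemma T_act_hom_bilin (U : lmodType K) X (g : hom U (cM (ectr (T_obj M)) X)) :
  bilin (fun a b => eact (T_obj M) X a (g b)).
Proof.
have [TPl TPr] := T_act_bilin X.
by split=> [b|a]; [apply: TPl | apply: linP_comp (TPr a) (homP g)].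
Qed.

Lemma T_is_ctr : is_ctr M -> is_ctr (ectr (T_obj M)).
Proof.
move=> [Mcoassoc Mcounit]; split=> [X Y Z phi [phiPl phiPr] | X m]; last first.
  apply: hom_ext => a; rewrite T_piE -[RHS](Mcounit X (m a)).
  apply: eq_cpi => c; rewrite -(psi_eps c a (homP m)).
  by apply: eq_tapp => a' c'; rewrite mkhomE //; apply: eps_smul_linP.
apply: hom_ext => a; rewrite !T_piE.
pose Phi g c := tapp (fun a' c' =>
  tapp (fun a'' g' => phi g' c' a'') (psi Y Z g a')) (psi X Y c a).
have PhiP : bilin Phi.
  split=> [c|g].
    apply: tapp_linP => a' c'; apply: psi_linPl.
    by split=> [v|u]; [apply: homP | apply/linP_eval/phiPl].
  apply: psi_linPl; split=> [v|u].
    by apply: psi_linPr; split=> [v'|u']; [apply: homP | apply/linP_eval/phiPl].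
  by apply: tapp_linP => a'' g'; apply/linP_eval/phiPr.
transitivity (cpi M X Y (mkhom (fun c => cpi M Y Z (mkhom (fun g => Phi g c))))).
  apply: eq_cpi => c.
  have piP : linearP (fun f => cpi (ectr (T_obj M)) Y Z (mkhom (fun g => phi g f))).
    apply: linP_comp (homP _) _.
    exact: (mkhom_linP (F := fun f g => phi g f)).
  under eq_tapp => a' c' do rewrite mkhomE // T_piE.
  rewrite -(linP_tapp _ _ (homP _)); congr (cpi M Y Z _).
  rewrite tapp_mkhom; last by move=> x y; apply/psi_linPl/T_pi_bilin.
  apply: eq_mkhom => g; apply: eq_tapp => a' c'.
  by apply: eq_tapp => a'' g'; rewrite mkhomE //; apply: phiPl.
rewrite Mcoassoc //; apply: eq_cpi => h.
have deltaP : linearP (fun h0 : Cm X Z => tapp phi (delta X Y Z h0)).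
  exact: delta_linP.
under [in RHS]eq_tapp => a' c' do rewrite mkhomE // tapp_homE.
symmetry; apply: (psi_delta h a (g := fun a0 k1 k2 => phi k1 k2 a0)).
split=> [v x|u x|u v]; [exact: homP | exact/linP_eval/phiPl | exact/linP_eval/phiPr].
Qed.

Lemma T_is_ent : is_ctr M -> is_ent (T_obj M).
Proof.
move=> HM; split=> [|X|X a b m|X m|X Y phi a]; first exact: T_is_ctr.
- exact: T_act_bilin.
- by apply: hom_ext => x; rewrite !T_actE mulrA.
- by apply: hom_ext => x; rewrite T_actE mulr1.
apply: hom_ext => x; rewrite T_actE !T_piE; apply: eq_cpi => c.
rewrite psi_mul; last exact: T_pi_bilin.
apply: eq_tapp => x' c'; rewrite mkhomE ?tapp_homE; last first.
  by apply: psi_linPl; apply: T_act_hom_bilin.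
by apply: eq_tapp => a' c''; rewrite T_actE.
Qed.

End TContramodule.

Lemma T_free_piE (V : lmodType K) (Y0 X Z : Ob)
  (Xi : hom (Cm X Z) (hom A (hom (Cm Z Y0) V))) a h :
  cpi (ectr (T_obj (free_ctr V Y0))) X Z Xi a h
  = tapp (fun h1 h2 => tapp (fun a' c' => Xi c' a' h1) (psi X Z h2 a)) (delta X Z Y0 h).
Proof.
rewrite T_piE free_piE; apply: eq_tapp => h1 h2.
by rewrite mkhomE ?tapp_homE //; apply/psi_linPl/T_pi_bilin.
Qed.

Section UnitCounit.
Unset Implicit Arguments.
Variables (sigma : forall X : Ob, Cm X X -> A -> K)
          (lam : forall X : Ob, Cm X X -> seq (A * A)).
Set Implicit Arguments.
Hypothesis sigma_bilin : forall X : Ob, bilin (sigma X : Cm X X -> A -> K^o).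
Hypothesis lam_linP : forall X (W : lmodType K) (b : A -> A -> W),
  bilin b -> linearP (fun g => tapp b (lam X g)).

Lemma sigma_linPl X a : linearP (fun f => sigma X f a : K^o).
Proof. by have [sP _] := sigma_bilin X; apply: sP. Qed.

Lemma sigma_linPr X f : linearP (fun a => sigma X f a : K^o).
Proof. by have [_ sP] := sigma_bilin X; apply: sP. Qed.

Definition unit_sigma (M : ctr C) (X : Ob) : hom (cM M X) (hom A (cM M X)) :=
  hom2 (fun m a => cpi M X X (mkhom (fun f => sigma X f a *: m))).

Lemma unit_sigmaE (M : ctr C) X m a :
  unit_sigma M X m a = cpi M X X (mkhom (fun f => sigma X f a *: m)).
Proof.
rewrite hom2E //; split=> [a'|m']; apply: linP_comp (homP _) _.
  apply: (mkhom_linP (F := fun m f => sigma X f a' *: m)) => [m''|f].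
    exact/linP_scale/sigma_linPl.
  exact: linP_scaler.
by apply: (mkhom_linP (F := fun a f => sigma X f a *: m')) => [a''|f];
  apply: linP_scale; [apply: sigma_linPl | apply: sigma_linPr].
Qed.

Definition counit_lambda (N : ent) (X : Ob) : hom (hom A (cM (ectr N) X)) (cM (ectr N) X) :=
  mkhom (fun g : hom A (cM (ectr N) X) => cpi (ectr N) X X
    (mkhom (fun f => tapp (fun l1 l2 => eact N X l1 (g l2)) (lam X f)))).

Lemma counit_lambdaE (N : ent) X g : is_ent N ->
  counit_lambda N X g = cpi (ectr N) X X
    (mkhom (fun f => tapp (fun l1 l2 => eact N X l1 (g l2)) (lam X f))).
Proof.
move=> HN; rewrite /counit_lambda mkhomE //; apply: linP_comp (homP _) _.
apply: (mkhom_linP (F := fun (g : hom A (cM (ectr N) X)) f =>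
  tapp (fun l1 l2 => eact N X l1 (g l2)) (lam X f))) => [g'|f].
  exact/lam_linP/ent_act_hom_bilin.
by apply: tapp_linP => l1 l2; apply: linP_comp (ent_linPr HN l1) _.
Qed.

Lemma unit_sigma_natural (M M' : ctr C) (h : forall X, hom (cM M X) (cM M' X)) :
  is_ctr_mor M M' h ->
  forall X m, T_mor M M' h X (unit_sigma M X m) = unit_sigma M' X (h X m).
Proof.
move=> hmor X m; apply: hom_ext => a; rewrite T_morE !unit_sigmaE hmor.
by apply: eq_cpi => f; rewrite mkhomE ?homZ //; apply/linP_scale/sigma_linPl.
Qed.

Lemma counit_lambda_natural (N N' : ent)
  (k : forall X, hom (cM (ectr N) X) (cM (ectr N') X)) :
  is_ent N -> is_ent N' -> is_ent_mor N N' k ->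
  forall X g, counit_lambda N' X (T_mor (ectr N) (ectr N') k X g) = k X (counit_lambda N X g).
Proof.
move=> HN HN' [kpi kact] X g; rewrite !counit_lambdaE // kpi.
apply: eq_cpi => f; rewrite mkhomE; last exact/lam_linP/ent_act_hom_bilin.
rewrite (linP_tapp _ _ (homP _)).
by apply: eq_tapp => l1 l2; rewrite T_morE kact.
Qed.

Section Backward.
Hypothesis sigma_psi : forall (X Y : Ob) (f : Cm X Y) (a : A),
  tapp (fun g1 g2 => tapp (fun a' g2' => sigma Y g1 a' *: g2') (psi X Y g2 a))
       (delta X Y Y f)
  = tapp (fun g1 g2 => sigma X g2 a *: g1) (delta X X Y f).
Hypothesis lam_coassoc : forall (X Y : Ob) (f : Cm X Y) (W : lmodType K)
  (g : A -> A -> Cm X Y -> W), trilin g ->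
  tapp (fun g1 g2 => tapp (fun l1 l2 => g l1 l2 g2) (lam Y g1)) (delta X Y Y f)
  = tapp (fun g1 g2 =>
         tapp (fun l1 l2 =>
                 tapp (fun l1' g1' => tapp (fun l2' g1'' => g l1' l2' g1'') (psi X Y g1' l2))
                      (psi X Y g1 l1))
              (lam X g2))
         (delta X X Y f).
Hypothesis lam_comm : forall (Z : Ob) (g : Cm Z Z) (a : A) (W : lmodType K)
  (b : A -> A -> W), bilin b ->
  tapp (fun l1 l2 => b l1 (l2 * a)) (lam Z g)
  = tapp (fun a' g' => tapp (fun l1 l2 => b (a' * l1) l2) (lam Z g')) (psi Z Z g a).
Hypothesis sigma_lam : forall (X : Ob) (f : Cm X X),
  eps X f *: (1 : A)
  = tapp (fun f1 f2 => tapp (fun l1 l2 => sigma X f1 l1 *: l2) (lam X f2))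
         (delta X X X f).
Hypothesis sigma_lam_psi : forall (X : Ob) (f : Cm X X),
  eps X f *: (1 : A)
  = tapp (fun f1 f2 =>
            tapp (fun l1 l2 => tapp (fun l1' f1' => sigma X f1' l2 *: l1') (psi X X f1 l1))
                 (lam X f2))
         (delta X X X f).

Lemma triangle_S_of_sigma_lam (N : ent) : is_ent N ->
  forall X m, counit_lambda N X (unit_sigma (ectr N) X m) = m.
Proof.
move=> HN X m; have actmP := ent_linPl HN m.
rewrite counit_lambdaE //.
pose Phi (c f : Cm X X) := tapp (fun l1 l2 =>
  tapp (fun a' c' => sigma X c' l2 *: eact N X a' m) (psi X X c l1)) (lam X f).
have PhiP : bilin Phi.
  have inP l2 : bilin (fun a' c' => sigma X c' l2 *: eact N X a' m).
    by split=> [c'|a']; [apply: linP_comp (linP_scaler _) actmP | apply/linP_scale/sigma_linPl].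
  split=> [f|c]; first by apply: tapp_linP => l1 l2; apply/psi_linPl/inP.
  apply: lam_linP; split=> [l2|l1]; first exact/psi_linPr/inP.
  by apply: tapp_linP => a' c'; apply/linP_scale/sigma_linPr.
transitivity (cpi (ectr N) X X (mkhom (fun f => cpi (ectr N) X X (mkhom (fun c => Phi c f))))).
  apply: eq_cpi => f.
  under eq_tapp => l1 l2 do rewrite unit_sigmaE ent_act_pi //.
  rewrite tapp_cpi; last by move=> l1 l2; apply/psi_linPl/ent_act_hom_bilin.
  apply: eq_cpi => c; apply: eq_tapp => l1 l2; apply: eq_tapp => a' c'.
  rewrite mkhomE; last exact/linP_scale/sigma_linPl.
  exact: (linPZ (ent_linPr HN a')).
rewrite (ctr_coassoc (ent_ctr HN) PhiP) -[RHS](ctr_counit m (ent_ctr HN)); apply: eq_cpi => h.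
rewrite -[m in RHS](ent_act1 HN) -(linPZ actmP) sigma_lam_psi (linP_tapp _ _ actmP).
apply: eq_tapp => f1 f2; rewrite (linP_tapp _ _ actmP); apply: eq_tapp => l1 l2.
by rewrite (linP_tapp _ _ actmP); apply: eq_tapp => a' c'; rewrite (linPZ actmP).
Qed.

Lemma triangle_T_of_sigma_lam (M : ctr C) : is_ctr M ->
  forall X g, counit_lambda (T_obj M) X (T_mor M (S_obj (T_obj M)) (unit_sigma M) X g) = g.
Proof.
move=> HM X g; have gaP a := linP_comp (homP g) (linP_mulr a).
have HT := T_is_ent HM.
rewrite counit_lambdaE //; apply: hom_ext => a; rewrite T_piE.
pose Phi (f c : Cm X X) := tapp (fun l1 l2 => sigma X f l1 *: g (l2 * a)) (lam X c).
have PhiP : bilin Phi.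
  split=> [c|f]; first by apply: tapp_linP => l1 l2; apply/linP_scale/sigma_linPl.
  apply: lam_linP; split=> [l2|l1]; first exact/linP_scale/sigma_linPr.
  exact: linP_comp (linP_scaler _) (gaP a).
transitivity (cpi M X X (mkhom (fun c => cpi M X X (mkhom (fun f => Phi f c))))).
  apply: eq_cpi => c.
  have lamP : linearP (fun f => tapp (fun l1 l2 => eact (T_obj M) X l1
      (T_mor M (S_obj (T_obj M)) (unit_sigma M) X g l2)) (lam X f)).
    exact/lam_linP/T_act_hom_bilin.
  under eq_tapp => a' c' do rewrite mkhomE // tapp_homE.
  under eq_tapp => a' c' do under eq_tapp => l1 l2 do rewrite T_actE T_morE.
  rewrite -(lam_comm c a (b := fun l1 l2 => unit_sigma M X (g l2) l1)); last first.
    by split=> [l2|l1]; [apply: homP | apply/linP_eval/(linP_comp (homP _) (homP g))].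
  under eq_tapp => l1 l2 do rewrite unit_sigmaE.
  by rewrite tapp_cpi //; move=> l1 l2; apply/linP_scale/sigma_linPl.
rewrite (ctr_coassoc HM PhiP) -[RHS](ctr_counit (g a) HM); apply: eq_cpi => h.
transitivity (g ((eps X h *: 1) * a)); last by rewrite -scalerAl mul1r homZ.
rewrite sigma_lam (linP_tapp _ _ (gaP a)).
apply: eq_tapp => f1 f2; rewrite (linP_tapp _ _ (gaP a)); apply: eq_tapp => l1 l2.
by rewrite -scalerAl homZ.
Qed.

Lemma unit_sigma_ctr_mor (M : ctr C) : is_ctr M ->
  is_ctr_mor M (S_obj (T_obj M)) (unit_sigma M).
Proof.
move=> HM X Y phi; apply: hom_ext => a; rewrite unit_sigmaE T_piE.
pose Phi (g : Cm X Y) (f : Cm X X) := sigma X f a *: phi g.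
have PhiP : bilin Phi.
  split=> [f|g]; [exact: linP_comp (linP_scaler _) (homP phi) | exact/linP_scale/sigma_linPl].
pose Phi' (g : Cm Y Y) (c : Cm X Y) := tapp (fun a' c' => sigma Y g a' *: phi c') (psi X Y c a).
have Phi'P : bilin Phi'.
  split=> [c|g]; first by apply: tapp_linP => a' c'; apply/linP_scale/sigma_linPl.
  apply: psi_linPl; split=> [c'|a']; first exact/linP_scale/sigma_linPr.
  exact: linP_comp (linP_scaler _) (homP phi).
transitivity (cpi M X X (mkhom (fun f => cpi M X Y (mkhom (fun g => Phi g f))))).
  apply: eq_cpi => f; rewrite -homZ; congr (cpi M X Y _).
  apply: hom_ext => g; rewrite mkhomE //.
  exact: linP_comp (linP_scaler _) (homP phi).
rewrite (ctr_coassoc HM PhiP).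
transitivity (cpi M X Y (mkhom (fun c => cpi M Y Y (mkhom (fun g => Phi' g c))))); last first.
  apply: eq_cpi => c.
  have unitP : linearP (fun c0 => unit_sigma M Y (phi c0)) by apply: linP_comp (homP _) (homP phi).
  under eq_tapp => a' c' do rewrite mkhomE // unit_sigmaE.
  by rewrite tapp_cpi //; move=> a' c'; apply/linP_scale/sigma_linPl.
rewrite (ctr_coassoc HM Phi'P); apply: eq_cpi => h.
rewrite /Phi /Phi'.
transitivity (phi (tapp (fun g1 g2 => sigma X g2 a *: g1) (delta X X Y h))).
  by rewrite (linP_tapp _ _ (homP phi)); apply: eq_tapp => x y; rewrite homZ.
rewrite -sigma_psi; rewrite (linP_tapp _ _ (homP phi)); apply: eq_tapp => x y.
by rewrite (linP_tapp _ _ (homP phi)); apply: eq_tapp => x' y'; rewrite homZ.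
Qed.

Lemma counit_lambda_act (N : ent) : is_ent N ->
  forall X a g,
  counit_lambda N X (eact (T_obj (S_obj N)) X a g) = eact N X a (counit_lambda N X g).
Proof.
move=> HN X a g; rewrite !counit_lambdaE // ent_act_pi //; apply: eq_cpi => f.
under eq_tapp => l1 l2 do rewrite T_actE.
have lamP : linearP (fun f' => tapp (fun l1 l2 => eact N X l1 (g l2)) (lam X f')).
  exact/lam_linP/ent_act_hom_bilin.
rewrite (lam_comm f a (ent_act_hom_bilin HN g)); apply: eq_tapp => a' c'.
rewrite mkhomE // (linP_tapp _ _ (ent_linPr HN a')).
by apply: eq_tapp => l1 l2; rewrite (ent_actM HN).
Qed.

Lemma counit_lambda_ctr_mor (N : ent) : is_ent N ->
  is_ctr_mor (S_obj (T_obj (S_obj N))) (S_obj N) (counit_lambda N).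
Proof.
move=> HN X Y phi; have HNc := ent_ctr HN.
rewrite !counit_lambdaE //.
pose G (l1 l2 : A) (c : Cm X Y) := eact N Y l1 (phi c l2).
have GP : trilin G.
  split=> [l2 c|l1 c|l1 l2]; first exact: ent_linPl.
    exact: linP_comp (ent_linPr HN l1) (homP _).
  exact: linP_comp (ent_linPr HN l1) (homP_eval phi l2).
have inP l1 : bilin (fun l2 c => G l1 l2 c) by case: GP => _ GP2 GP3; split=> [?|?]; [apply: GP2 | apply: GP3].
have midP l2 : bilin (fun l1 c => tapp (fun l1' c' => G l1 l1' c') (psi X Y c l2)).
  split=> [c|l1]; last exact/psi_linPl/inP.
  by apply: tapp_linP => l1' c'; case: GP => GP1 _ _; apply: GP1.
pose Phi (c : Cm X Y) (f : Cm X X) := tapp (fun l1 l2 => tapp (fun a' c' =>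
   tapp (fun a'' c'' => G a' a'' c'') (psi X Y c' l2)) (psi X Y c l1)) (lam X f).
have PhiP : bilin Phi.
  split=> [f|c]; first by apply: tapp_linP => l1 l2; apply/psi_linPl/midP.
  apply: lam_linP; split=> [l2|l1]; first exact/psi_linPr/midP.
  by apply: tapp_linP => a' c'; apply/psi_linPr/inP.
pose Phi' (g : Cm Y Y) (c : Cm X Y) := tapp (fun l1 l2 => G l1 l2 c) (lam Y g).
have Phi'P : bilin Phi'.
  split=> [c|g]; last by apply: tapp_linP => l1 l2; case: GP => _ _; apply.
  by apply: lam_linP; case: GP => GP1 GP2 _; split=> [?|?]; [apply: GP1 | apply: GP2].
transitivity (cpi (ectr N) X X (mkhom (fun f => cpi (ectr N) X Y (mkhom (fun c => Phi c f))))).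
  apply: eq_cpi => f.
  under eq_tapp => l1 l2 do rewrite T_piE ent_act_pi //.
  rewrite tapp_cpi; last by move=> l1 l2; apply/psi_linPl/ent_act_hom_bilin.
  apply: eq_cpi => c; apply: eq_tapp => l1 l2; apply: eq_tapp => a' c'.
  rewrite mkhomE; last exact/psi_linPl/T_pi_bilin.
  exact: (linP_tapp _ _ (ent_linPr HN a')).
rewrite (ctr_coassoc HNc PhiP).
transitivity (cpi (ectr N) X Y (mkhom (fun c => cpi (ectr N) Y Y (mkhom (fun g => Phi' g c))))).
  by rewrite (ctr_coassoc HNc Phi'P); apply: eq_cpi => h; rewrite (lam_coassoc h GP).
by apply: eq_cpi => c; rewrite counit_lambdaE.
Qed.

Lemma T_left_adjoint_S_of_sigma_lam : T_left_adjoint_S psi.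
Proof.
exists unit_sigma, counit_lambda; split; split.
- exact: unit_sigma_ctr_mor.
- by move=> N HN; split; [apply: counit_lambda_ctr_mor | apply: counit_lambda_act].
- by move=> M M' h _ _ hmor X m; apply: unit_sigma_natural.
- by move=> N N' k HN HN' kmor X g; apply: counit_lambda_natural.
- exact: triangle_T_of_sigma_lam.
- exact: triangle_S_of_sigma_lam.
Qed.

End Backward.

End UnitCounit.

Section FreeEntwined.
Variable X0 : Ob.
Local Notation AA := (tensor A A).

Lemma tmull_hom_bilin (Y : Ob) (phi : hom (Cm Y X0) AA) :
  bilin (fun a c => tmull a (phi c)).
Proof. by split=> [c|a]; [apply: tmull_linPl | apply: linP_comp (tmull_linP a) (homP phi)]. Qed.

Definition free_act (Y : Ob) (a : A) (phi : cM (free_ctr AA X0) Y) : cM (free_ctr AA X0) Y :=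
  mkhom (fun c => tapp (fun a' c' => tmull a' (phi c')) (psi Y X0 c a)).

Definition free_ent : ent := Ent K C A (free_ctr AA X0) free_act.

Lemma free_actE Y a (phi : cM (free_ctr AA X0) Y) c :
  free_act a phi c = tapp (fun a' c' => tmull a' (phi c')) (psi Y X0 c a).
Proof. by rewrite /free_act mkhomE //; apply/psi_linPl/tmull_hom_bilin. Qed.

Lemma free_act_linPr Y a : linearP (@free_act Y a).
Proof.
apply: linP_pointwise => c k x y; rewrite !free_actE -tappZ -tappD.
by apply: eq_tapp => a' c'; rewrite tmull_linP.
Qed.

Lemma free_ent_is_ent : is_ent free_ent.
Proof.
split=> [|Y|Y a b phi|Y phi|X Y phi a]; first exact: free_ctr_is_ctr.
- split=> [phi|a]; last exact: free_act_linPr.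
  apply: linP_pointwise => c k x y; rewrite /= !free_actE.
  exact/psi_linPr/tmull_hom_bilin.
- apply: hom_ext => c; rewrite /= !free_actE psi_mul; last exact: tmull_hom_bilin.
  apply: eq_tapp => a' c'; rewrite free_actE (linP_tapp _ _ (tmull_linP a')).
  by apply: eq_tapp => b' c''; rewrite tmullM.
- apply: hom_ext => c; rewrite /= free_actE psi_one ?tmull1 //.
  exact: tmull_hom_bilin.
apply: hom_ext => h; rewrite /= free_actE !free_piE.
under eq_tapp => a' c' do rewrite free_piE (linP_tapp _ _ (tmull_linP a')).
rewrite (psi_delta h a (g := fun a0 k1 k2 => tmull a0 (phi k2 k1))); last first.
  split=> [k1 k2|a0 k2|a0 k1]; first exact: tmull_linPl.
    exact: linP_comp (tmull_linP a0) (homP _).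
  exact: linP_comp (tmull_linP a0) (homP_eval phi k1).
have actP : linearP (fun c0 : Cm X Y => tapp (fun a' c' => free_act a' (phi c')) (psi X Y c0 a)).
  apply: psi_linPl; split=> [c'|a']; last exact: linP_comp (free_act_linPr a') (homP phi).
  apply: linP_pointwise => c k x y; rewrite !free_actE.
  exact/psi_linPr/tmull_hom_bilin.
apply: eq_tapp => h1 h2; rewrite mkhomE // tapp_homE.
by apply: eq_tapp => a' c'; rewrite free_actE.
Qed.

Definition free_gen : hom A (cM (free_ctr AA X0) X0) :=
  mkhom (fun a => eps_scale X0 (tens 1 a)).

Lemma free_genE a c : free_gen a c = eps X0 c *: tens 1 a.
Proof.
have [_ tP] := tens_bilin A A.
by rewrite mkhomE ?eps_scaleE //; apply: linP_comp (homP _) (tP 1).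
Qed.

Section FreeEntwinedMorphism.
Variables (N : ent) (HN : is_ent N) (u : hom A (cM (ectr N) X0)).

Definition tens_act : AA -> cM (ectr N) X0 := tlift (fun x y => eact N X0 x (u y)).

Lemma tens_act_linP : linearP tens_act.
Proof. exact/tlift_linP/ent_act_hom_bilin. Qed.

Lemma tens_act_tens x y : tens_act (tens x y) = eact N X0 x (u y).
Proof. exact/tlift_tens/ent_act_hom_bilin. Qed.

Lemma tens_act_tmull a t : tens_act (tmull a t) = eact N X0 a (tens_act t).
Proof.
apply: (tensor_ind (f := fun t => tens_act (tmull a t)) (g := fun t => eact N X0 a (tens_act t))).
- exact: linP_comp tens_act_linP (tmull_linP a).
- exact: linP_comp (ent_linPr HN a) tens_act_linP.
- by move=> x y; rewrite tmull_tens !tens_act_tens (ent_actM HN).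
Qed.

Lemma tens_act_hom_linP Y (phi : hom (Cm Y X0) AA) : linearP (fun c => tens_act (phi c)).
Proof. exact: linP_comp tens_act_linP (homP phi). Qed.

Definition free_ent_mor (Y : Ob) : hom (cM (free_ctr AA X0) Y) (cM (ectr N) Y) :=
  mkhom (fun phi : cM (free_ctr AA X0) Y =>
    cpi (ectr N) Y X0 (mkhom (fun c => tens_act (phi c)))).

Lemma free_ent_morE Y phi :
  free_ent_mor Y phi = cpi (ectr N) Y X0 (mkhom (fun c => tens_act (phi c))).
Proof.
rewrite /free_ent_mor mkhomE //; apply: linP_comp (homP _) _.
apply: (mkhom_linP (F := fun (phi : cM (free_ctr AA X0) Y) c => tens_act (phi c))) => [phi'|c].
  exact: tens_act_hom_linP.
exact: linP_comp tens_act_linP (linP_eval _ _).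
Qed.

Lemma free_ent_mor_is_mor : is_ent_mor free_ent N free_ent_mor.
Proof.
have HNc := ent_ctr HN.
split=> [X Y phi | X a phi]; rewrite !free_ent_morE.
  transitivity (cpi (ectr N) X Y (mkhom (fun c =>
    cpi (ectr N) Y X0 (mkhom (fun g => tens_act (phi c g)))))); last first.
    by apply: eq_cpi => c; rewrite free_ent_morE.
  rewrite ctr_coassoc //; last first.
    split=> [g|c]; first exact: tens_act_hom_linP.
    exact: linP_comp tens_act_linP (homP_eval _ _).
  by apply: eq_cpi => h; rewrite free_piE (linP_tapp _ _ tens_act_linP).
rewrite ent_act_pi //; apply: eq_cpi => c.
rewrite /= free_actE (linP_tapp _ _ tens_act_linP).
by apply: eq_tapp => a' c'; rewrite tens_act_tmull mkhomE //; apply: tens_act_hom_linP.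
Qed.

Lemma free_ent_mor_gen a : free_ent_mor X0 (free_gen a) = u a.
Proof.
rewrite free_ent_morE -[RHS](ctr_counit _ (ent_ctr HN)); apply: eq_cpi => c.
by rewrite free_genE (linPZ tens_act_linP) tens_act_tens (ent_act1 HN).
Qed.

End FreeEntwinedMorphism.
End FreeEntwined.

Section Forward.
Unset Implicit Arguments.
Variables (eta : forall (M : ctr C) (X : Ob), hom (cM M X) (hom A (cM M X)))
          (epsT : forall (N : ent) (X : Ob), hom (hom A (cM (ectr N) X)) (cM (ectr N) X)).
Hypothesis eta_mor : forall M : ctr C, is_ctr M -> is_ctr_mor M (S_obj (T_obj M)) (eta M).
Hypothesis epsT_mor : forall N, is_ent N -> is_ent_mor (T_obj (S_obj N)) N (epsT N).
Hypothesis eta_natural : forall (M M' : ctr C) (h : forall X : Ob, hom (cM M X) (cM M' X)),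
  is_ctr M -> is_ctr M' -> is_ctr_mor M M' h ->
  forall (X : Ob) (m : cM M X), T_mor M M' h X (eta M X m) = eta M' X (h X m).
Hypothesis epsT_natural : forall (N N' : ent)
  (k : forall X : Ob, hom (cM (ectr N) X) (cM (ectr N') X)),
  is_ent N -> is_ent N' -> is_ent_mor N N' k ->
  forall (X : Ob) (g : hom A (cM (ectr N) X)),
    epsT N' X (T_mor (ectr N) (ectr N') k X g) = k X (epsT N X g).
Hypothesis triangle_T : forall M : ctr C, is_ctr M ->
  forall (X : Ob) (g : hom A (cM M X)),
    epsT (T_obj M) X (T_mor M (S_obj (T_obj M)) (eta M) X g) = g.
Hypothesis triangle_S : forall N, is_ent N ->
  forall (X : Ob) (m : cM (ectr N) X), epsT N X (eta (ectr N) X m) = m.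

Definition sigma_of (X : Ob) (f : Cm X X) (a : A) : K :=
  eta (free_ctr K^o X) X (mkhom (eps X : Cm X X -> K^o)) a f.

Definition lambda_of (X : Ob) (f : Cm X X) : seq (A * A) :=
  tseq (epsT (free_ent X) X (free_gen X) f).
Set Implicit Arguments.

Lemma sigma_of_bilin X : bilin (sigma_of X : Cm X X -> A -> K^o).
Proof. by split=> [a|f]; [apply: homP | apply/linP_eval/homP]. Qed.

Lemma lambda_of_linP X (W : lmodType K) (b : A -> A -> W) :
  bilin b -> linearP (fun g => tapp b (lambda_of X g)).
Proof. by move=> bb; apply: linP_comp (tlift_linP bb) (homP _). Qed.

Section UnitYoneda.
Variables (M : ctr C) (HM : is_ctr M) (X0 : Ob) (m : cM M X0).

Definition free_scalar_mor (Y : Ob) : hom (cM (free_ctr K^o X0) Y) (cM M Y) :=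
  mkhom (fun phi : cM (free_ctr K^o X0) Y => cpi M Y X0 (mkhom (fun c => phi c *: m))).

Lemma free_scalar_morE Y phi :
  free_scalar_mor Y phi = cpi M Y X0 (mkhom (fun c => phi c *: m)).
Proof.
rewrite /free_scalar_mor mkhomE //; apply: linP_comp (homP _) _.
apply: (mkhom_linP (F := fun (phi : cM (free_ctr K^o X0) Y) c => phi c *: m)) => [phi'|c].
  exact/linP_scale/homP.
exact: linP_comp (linP_scalar m) (linP_eval _ _).
Qed.

Lemma free_scalar_mor_is_mor : is_ctr_mor (free_ctr K^o X0) M free_scalar_mor.
Proof.
move=> X Y phi; rewrite free_scalar_morE.
transitivity (cpi M X Y (mkhom (fun c =>
  cpi M Y X0 (mkhom (fun g => phi c g *: m))))); last first.
  by apply: eq_cpi => c; rewrite free_scalar_morE.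
rewrite ctr_coassoc //; last first.
  split=> [g|c]; first exact/linP_scale/homP.
  exact: linP_comp (linP_scalar m) (homP_eval _ _).
by apply: eq_cpi => h; rewrite free_piE (linP_tapp _ _ (linP_scalar m)).
Qed.

Lemma free_scalar_mor_eps :
  free_scalar_mor X0 (mkhom (eps X0 : Cm X0 X0 -> K^o)) = m.
Proof.
rewrite free_scalar_morE -[RHS](ctr_counit m HM); apply: eq_cpi => c.
by rewrite mkhomE //; case: Ccoalg => _ eP _ _; apply: eP.
Qed.

Lemma unit_is_unit_sigma : eta M X0 m = unit_sigma sigma_of M X0 m.
Proof.
apply: hom_ext => a; rewrite (unit_sigmaE sigma_of_bilin) -{1}free_scalar_mor_eps.
rewrite -(eta_natural _ _ _ (free_ctr_is_ctr K^o X0) HM free_scalar_mor_is_mor).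
by rewrite T_morE free_scalar_morE.
Qed.

End UnitYoneda.

Lemma counit_is_counit_lambda (N : ent) (X : Ob) (u : hom A (cM (ectr N) X)) :
  is_ent N -> epsT N X u = counit_lambda lambda_of N X u.
Proof.
move=> HN; have gen_u : T_mor _ _ (free_ent_mor u) X (free_gen X) = u.
  by apply: hom_ext => a; rewrite T_morE (free_ent_mor_gen HN).
rewrite -{1}gen_u (epsT_natural _ _ _ (free_ent_is_ent X) HN (free_ent_mor_is_mor HN u)).
by rewrite (free_ent_morE HN) (counit_lambdaE lambda_of_linP).
Qed.

Lemma unit_freeE (V : lmodType K) (Y X : Ob) m a h :
  eta (free_ctr V Y) X m a h = tapp (fun h1 h2 => sigma_of X h2 a *: m h1) (delta X X Y h).
Proof.
rewrite (unit_is_unit_sigma (free_ctr_is_ctr V Y)) (unit_sigmaE sigma_of_bilin) free_piE.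
by apply: eq_tapp => h1 h2; rewrite mkhomE //; apply/linP_scale/(sigma_linPl sigma_of_bilin).
Qed.

Lemma counit_T_freeE (V : lmodType K) (Y X : Ob) u a h :
  epsT (T_obj (free_ctr V Y)) X u a h
  = tapp (fun h1 h2 => tapp (fun a' c' =>
      tapp (fun l1 l2 => u l2 (a' * l1) h1) (lambda_of X c')) (psi X X h2 a))
      (delta X X Y h).
Proof.
have HN := T_is_ent (free_ctr_is_ctr V Y).
rewrite (counit_is_counit_lambda _ HN) (counit_lambdaE lambda_of_linP) // T_free_piE.
apply: eq_tapp => h1 h2; apply: eq_tapp => a' c'.
rewrite mkhomE ?tapp_homE; last exact/lambda_of_linP/(T_act_hom_bilin u).
by apply: eq_tapp => l1 l2; rewrite T_actE.
Qed.

Lemma counit_T_freeE1 (V : lmodType K) (Y X : Ob) u h :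
  epsT (T_obj (free_ctr V Y)) X u 1 h
  = tapp (fun h1 h2 => tapp (fun l1 l2 => u l2 l1 h1) (lambda_of X h2)) (delta X X Y h).
Proof.
rewrite counit_T_freeE; apply: eq_tapp => h1 h2.
rewrite psi_one; first by apply: eq_tapp => l1 l2; rewrite mul1r.
have uP l1 l2 : linearP (fun a' : A => u l2 (a' * l1) h1).
  by apply: linP_eval; apply: linP_comp (homP _) (linP_mulr l1).
split=> [c'|a']; first by apply: tapp_linP => l1 l2; apply: uP.
apply: lambda_of_linP; split=> [l2|l1]; last by do 2!apply: linP_eval; apply: homP.
by apply: linP_eval; apply: linP_comp (homP _) (linP_mull a').
Qed.


Lemma sigma_of_psi (X Y : Ob) (f : Cm X Y) (a : A) :
  tapp (fun g1 g2 => tapp (fun a' g2' => sigma_of Y g1 a' *: g2') (psi X Y g2 a))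
       (delta X Y Y f)
  = tapp (fun g1 g2 => sigma_of X g2 a *: g1) (delta X X Y f).
Proof.
have HM := free_ctr_is_ctr (Cm X Y) Y.
pose phi0 : hom (Cm X Y) (hom (Cm Y Y) (Cm X Y)) := eps_scale Y.
have pi_phi0 h : cpi (free_ctr (Cm X Y) Y) X Y phi0 h = h.
  rewrite free_piE; transitivity (tapp (fun h1 h2 => eps Y h1 *: h2) (delta X Y Y h)).
    by apply: eq_tapp => h1 h2; rewrite eps_scaleE.
  exact: (counitl h (L := id)).
transitivity (eta _ X (cpi (free_ctr (Cm X Y) Y) X Y phi0) a f); last first.
  by rewrite unit_freeE; apply: eq_tapp => h1 h2; rewrite pi_phi0.
rewrite (eta_mor _ HM) T_free_piE; apply: eq_tapp => h1 h2; apply: eq_tapp => a' c'.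
rewrite mkhomE; last exact: linP_comp (homP _) (homP phi0).
rewrite unit_freeE -(counitl h1 (L := fun k => sigma_of Y k a' *: c')); last first.
  exact/linP_scale/(sigma_linPl sigma_of_bilin).
by apply: eq_tapp => k1 k2; rewrite eps_scaleE !scalerA mulrC.
Qed.

Lemma sigma_lambda_of (X : Ob) (f : Cm X X) :
  eps X f *: (1 : A)
  = tapp (fun f1 f2 => tapp (fun l1 l2 => sigma_of X f1 l1 *: l2) (lambda_of X f2))
         (delta X X X f).
Proof.
have HM := free_ctr_is_ctr A X.
rewrite -[LHS](eps_scaleE (1 : A) f) -{1}(triangle_T _ HM X (eps_scale X)) counit_T_freeE1.
apply: eq_tapp => h1 h2; apply: eq_tapp => l1 l2.
rewrite T_morE unit_freeE -(counitl h1 (L := fun k => sigma_of X k l1 *: l2)); last first.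
  exact/linP_scale/(sigma_linPl sigma_of_bilin).
by apply: eq_tapp => k1 k2; rewrite eps_scaleE !scalerA mulrC.
Qed.

Lemma sigma_lambda_of_psi (X : Ob) (f : Cm X X) :
  eps X f *: (1 : A)
  = tapp (fun f1 f2 =>
            tapp (fun l1 l2 => tapp (fun l1' f1' => sigma_of X f1' l2 *: l1') (psi X X f1 l1))
                 (lambda_of X f2))
         (delta X X X f).
Proof.
have HN := T_is_ent (free_ctr_is_ctr A X).
rewrite -[LHS](eps_scaleE (1 : A) f) -{1}(triangle_S _ HN X (eps_scale X)) counit_T_freeE1.
apply: eq_tapp => h1 h2; apply: eq_tapp => l1 l2.
have sP := sigma_linPl sigma_of_bilin.
rewrite (unit_is_unit_sigma (ent_ctr HN)) (unit_sigmaE sigma_of_bilin) T_free_piE.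
rewrite -(counitl h1 (L := fun k => tapp (fun a' c' => sigma_of X c' l2 *: a') (psi X X k l1))).
  apply: eq_tapp => k1 k2; rewrite -tappZ; apply: eq_tapp => a' c'.
  by rewrite mkhomE; [rewrite !scalehE eps_scaleE !scalerA mulrC | apply/linP_scale/sP].
by apply: psi_linPl; split=> [c'|a']; [apply: linP_scaler | apply/linP_scale/sP].
Qed.

Lemma lambda_of_comm (Z : Ob) (g : Cm Z Z) (a : A) (W : lmodType K) (b : A -> A -> W) :
  bilin b ->
  tapp (fun l1 l2 => b l1 (l2 * a)) (lambda_of Z g)
  = tapp (fun a' g' => tapp (fun l1 l2 => b (a' * l1) l2) (lambda_of Z g')) (psi Z Z g a).
Proof.
move=> [bPl bPr]; have HN := T_is_ent (free_ctr_is_ctr W Z).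
pose u : hom A (hom A (hom (Cm Z Z) W)) := hom2 (fun y x => eps_scale Z (b x y)).
have uE y x k : u y x k = eps Z k *: b x y.
  rewrite hom2E ?eps_scaleE //.
  by split=> [x'|y']; apply: linP_comp (homP _) _; [apply: bPr | apply: bPl].
have [_ act_mor] := epsT_mor _ HN.
transitivity (epsT _ Z (eact (T_obj (S_obj (T_obj (free_ctr W Z)))) Z a u) 1 g).
  rewrite counit_T_freeE1.
  rewrite -(counitl g (L := fun k => tapp (fun l1 l2 => b l1 (l2 * a)) (lambda_of Z k))).
    apply: eq_tapp => h1 h2; rewrite -tappZ; apply: eq_tapp => l1 l2.
    by rewrite T_actE uE.
  by apply: lambda_of_linP; split=> [l2|l1]; [apply: bPl | apply: linP_comp (bPr l1) (linP_mulr a)].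
rewrite act_mor T_actE mul1r counit_T_freeE.
rewrite -(counitl g (L := fun k => tapp (fun a' g' =>
  tapp (fun l1 l2 => b (a' * l1) l2) (lambda_of Z g')) (psi Z Z k a))).
  apply: eq_tapp => h1 h2; rewrite -tappZ; apply: eq_tapp => a' c'.
  by rewrite -tappZ; apply: eq_tapp => l1 l2; rewrite uE.
apply: psi_linPl; split=> [g'|a'].
  by apply: tapp_linP => l1 l2; apply: linP_comp (bPl l2) (linP_mulr l1).
by apply: lambda_of_linP; split=> [l2|l1]; [apply: linP_comp (bPl l2) (linP_mull a') | apply: bPr].
Qed.

Lemma lambda_of_coassoc (X Y : Ob) (f : Cm X Y) (W : lmodType K) (G : A -> A -> Cm X Y -> W) :
  trilin G ->
  tapp (fun g1 g2 => tapp (fun l1 l2 => G l1 l2 g2) (lambda_of Y g1)) (delta X Y Y f)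
  = tapp (fun g1 g2 =>
         tapp (fun l1 l2 =>
                 tapp (fun l1' g1' => tapp (fun l2' g1'' => G l1' l2' g1'') (psi X Y g1' l2))
                      (psi X Y g1 l1))
              (lambda_of X g2))
         (delta X X Y f).
Proof.
move=> [GP1 GP2 GP3]; have HN := T_is_ent (free_ctr_is_ctr W Y).
pose phi : hom (Cm X Y) (hom A (hom A (hom (Cm Y Y) W))) :=
  hom2 (fun c a => mkhom (fun x => eps_scale Y (G x a c))).
have innerP c a : linearP (fun x => eps_scale Y (G x a c)).
  exact: linP_comp (homP _) (GP1 a c).
have phiP : bilin (fun c a => mkhom (fun x => eps_scale Y (G x a c))).
  split=> [a|c]; apply: mkhom_linP => [? |x]; rewrite ?innerP //.
  - exact: linP_comp (homP _) (GP3 x a).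
  - exact: linP_comp (homP _) (GP2 x c).
have phiE c a x k : phi c a x k = eps Y k *: G x a c.
  by rewrite hom2E // mkhomE // eps_scaleE.
have [ctr_mor _] := epsT_mor _ HN.
transitivity (cpi (ectr (T_obj (free_ctr W Y))) X Y
  (mkhom (fun c => epsT (T_obj (free_ctr W Y)) Y (phi c))) 1 f).
  rewrite T_free_piE; apply: eq_tapp => h1 h2.
  rewrite psi_one; last first.
    by split=> [c|a]; [apply/linP_eval/homP | do 2!apply: linP_eval; apply: homP].
  rewrite mkhomE; last exact: linP_comp (homP _) (homP phi).
  rewrite counit_T_freeE1.
  rewrite -(counitl h1 (L := fun k => tapp (fun l1 l2 => G l1 l2 h2) (lambda_of Y k))).
    by apply: eq_tapp => k1 k2; rewrite -tappZ; apply: eq_tapp => l1 l2; rewrite phiE.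
  by apply: lambda_of_linP; split=> [?|?]; [apply: GP1 | apply: GP2].
rewrite -ctr_mor counit_T_freeE1; apply: eq_tapp => h1 h2; apply: eq_tapp => l1 l2.
rewrite T_piE T_free_piE.
rewrite -(counitl h1 (L := fun k => tapp (fun b' d' =>
  tapp (fun a' c' => G b' a' c') (psi X Y d' l2)) (psi X Y k l1))).
  apply: eq_tapp => k1 k2; rewrite -tappZ; apply: eq_tapp => b' d'.
  rewrite mkhomE; last exact/psi_linPl/(@T_pi_bilin (ectr (T_obj (free_ctr W Y))) _ _ phi).
  rewrite !tapp_homE -tappZ; apply: eq_tapp => a' c'.
  by rewrite phiE.
apply: psi_linPl; split=> [d'|b']; first by apply: tapp_linP => a' c'; apply: GP1.
by apply: psi_linPl; split=> [?|?]; [apply: GP2 | apply: GP3].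
Qed.

End Forward.

End Entwining.

Arguments sigma_of {K C A} eta X.
Arguments lambda_of {K C A} psi epsT X.

Unset Implicit Arguments.
Theorem theorem6p2 (K : fieldType) (C : coalg K) (A : algType K)
  (psi : forall X Y : Ob C, Cm X Y -> A -> seq (A * Cm X Y)) :
  is_coalg C -> is_entwining psi ->
  (T_left_adjoint_S psi <->
   exists (sigma : forall X : Ob C, Cm X X -> A -> K)
          (lam : forall X : Ob C, Cm X X -> seq (A * A)),
     [/\ in_V1 psi sigma, in_W1 psi lam,
         (forall (X : Ob C) (f : Cm X X),
            eps X f *: (1 : A)
            = tapp (fun f1 f2 =>
                      tapp (fun l1 l2 => sigma X f1 l1 *: l2) (lam X f2))
                   (delta X X X f)) &
         (forall (X : Ob C) (f : Cm X X),
            eps X f *: (1 : A)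
            = tapp (fun f1 f2 =>
                      tapp (fun l1 l2 =>
                              tapp (fun l1' f1' => sigma X f1' l2 *: l1')
                                   (psi X X f1 l1))
                           (lam X f2))
                   (delta X X X f))]).
Proof.
move=> Ccoalg psi_entw; split=> [[eta [epsT [[eta_mor epsT_mor eta_nat epsT_nat] [triT triS]]]] |
  [sigma [lam [[sigma_bil sigma_psi] [lam_lin lam_coassoc lam_comm] sigma_lam sigma_lam_psi]]]].
  exists (sigma_of eta), (lambda_of psi epsT); split.
  - by split; [apply: sigma_of_bilin | apply: sigma_of_psi].
  - by split; [apply: lambda_of_linP | apply: lambda_of_coassoc | apply: lambda_of_comm].
  - exact: sigma_lambda_of.
  - exact: sigma_lambda_of_psi.
exact: T_left_adjoint_S_of_sigma_lam sigma_bil lam_lin sigma_psi lam_coassoc lam_comm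
  sigma_lam sigma_lam_psi.
Qed.
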